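(* Let $F$ be a field, let $A$ be a finitely generated associative unital $F$-algebra, and let $n\ge 1$. Then the matrix algebra $M_n(A)$ of $n\times n$ matrices over $A$ is finitely presented if and only if $A$ is finitely presented.
   Context: An associative unital $F$-algebra $A$ is finitely presented if it is generated by finitely many elements $a_1,\dots,a_m$ and the kernel of the homomorphism $F\langle x_1,\dots,x_m\rangle\to A$, $x_i\mapsto a_i$, from the free associative algebra is finitely generated as a two-sided ideal (this does not depend on the choice of finite generating set). *)

From mathcomp Require Import all_boot all_order all_algebra.
Set Implicit Arguments. Unset Strict Implicit. Unset Printing Implicit Defensive.
Import GRing.Theory.
Local Open Scope ring_scope.

(* The free associative unital algebra F<x_0,...,x_(m-1)> is modelled as formal
   finite F-linear combinations of words in the letters 'I_m, two formal sums
   being identified when they have the same coefficient on every word.       *)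
Definition word (m : nat) := seq 'I_m.
Definition ncpoly (F : Type) (m : nat) := seq (F * word m).

Section FreeAlg.
Variables (F : nzRingType) (m : nat).

Definition nccoef (p : ncpoly F m) (w : word m) : F :=
  \sum_(e <- p | e.2 == w) e.1.

Definition ncequiv (p q : ncpoly F m) : Prop :=
  forall w, nccoef p w = nccoef q w.

Definition nceval (R : pzRingType) (s : F -> R) (a : 'I_m -> R)
  (p : ncpoly F m) : R :=
  \sum_(e <- p) s e.1 * \prod_(i <- e.2) a i.

Definition ncsandwich (c : F) (u : word m) (r : ncpoly F m) (u' : word m)
  : ncpoly F m := [seq (c * e.1, u ++ e.2 ++ u') | e <- r].

Definition in_ideal (k : nat) (rels : 'I_k -> ncpoly F m) (p : ncpoly F m)
  : Prop :=
  exists t : seq (F * word m * 'I_k * word m),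
    ncequiv p (flatten [seq ncsandwich t_.1.1.1 t_.1.1.2 (rels t_.1.2) t_.2
                       | t_ <- t]).
End FreeAlg.

Section FP.
Variables (F : fieldType) (R : pzRingType) (s : F -> R).

Definition generates (m : nat) (a : 'I_m -> R) : Prop :=
  forall x : R, exists p : ncpoly F m, nceval s a p = x.

Definition fg_kernel (m : nat) (a : 'I_m -> R) : Prop :=
  exists (k : nat) (rels : 'I_k -> ncpoly F m),
    (forall i, nceval s a (rels i) = 0) /\
    (forall p : ncpoly F m, nceval s a p = 0 -> in_ideal rels p).

Definition fin_gen_with : Prop :=
  exists (m : nat) (a : 'I_m -> R), generates a.

Definition fin_pres_with : Prop :=
  exists (m : nat) (a : 'I_m -> R), generates a /\ fg_kernel a.
End FP.

Definition fin_gen_alg (F : fieldType) (A : algType F) : Prop :=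
  fin_gen_with (fun c : F => c%:A : A).
Definition fin_pres_alg (F : fieldType) (A : algType F) : Prop :=
  fin_pres_with (fun c : F => c%:A : A).

Definition fin_pres_matrix (F : fieldType) (A : algType F) (n : nat) : Prop :=
  fin_pres_with (fun c : F => (c%:A)%:M : 'M[A]_n).

From HB Require Import structures.
From mathcomp Require Import all_boot all_order all_algebra.
From mathcomp Require Import finmap.
From mathcomp.multinomials Require Import monalg.
Set Implicit Arguments. Unset Strict Implicit. Unset Printing Implicit Defensive.
Import GRing.Theory.
Local Open Scope ring_scope.

(* Whether the kernel of
   a finite generating family is a finitely generated ideal does not depend on
   the family (Tietze transformations), so M_n(A) may be presented on the
   matrix units e_ij together with the scalar matrices of generators a_l of A.
   The entries of the lifts to M_n(F<a>) of relations of M_n(A) present A.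
   Conversely, relations of A together with e_ij e_kl = [j = k] e_il,
   sum_i e_ii = 1 and a_l e_ij = e_ij a_l present M_n(A): modulo them every g
   is congruent to sum_ij e_i0 psi(g)_ij e_0j, where psi : F<e, a> -> M_n(F<a>)
   is the evaluation at the lifted generators, and this lies in the ideal of
   the relations as soon as g vanishes in M_n(A). *)

(** * Free algebras *)

Notation falg F I := {malg F[fmonom I]}.

Definition fX (F : nzRingType) (I : choiceType) (i : I) : falg F I := << fmu i >>.
Arguments fX {F I} i.

Section WordEval.
Variables (S : nzRingType) (I : choiceType) (a : I -> S).

Definition word_eval (k : fmonom I) : S := \prod_(i <- k) a i.

Fact word_eval_is_mmorphism : mmorphism word_eval.
Proof. by split=> [k1 k2|]; rewrite /word_eval ?fmM ?fm1 ?big_cat ?big_nil. Qed.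
HB.instance Definition _ :=
  isMultiplicative.Build (fmonom I) S word_eval word_eval_is_mmorphism.
End WordEval.

Definition central_rmorph (R S : nzRingType) (s : R -> S) :=
  forall c x, GRing.comm (s c) x.

Section Evaluation.
Variables (F : comNzRingType) (S : nzRingType) (s : {rmorphism F -> S}).

(* The centrality proof is an argument of [feval], as for [horner_morph], so
   that [feval hs a] carries a canonical ring morphism structure. *)
Definition feval of central_rmorph s :=
  fun (I : choiceType) (a : I -> S) => mmap s (word_eval a).

Variables (hs : central_rmorph s) (I : choiceType) (a : I -> S).

HB.instance Definition _ := GRing.Additive.copy (feval hs a) (mmap s (word_eval a)).

Fact feval_is_monoid_morphism : monoid_morphism (feval hs a).
Proof.
have [fM f1] := commr_mmap_is_multiplicative (fun g k k' => hs g@_k (word_eval a k')).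
by split.
Qed.
HB.instance Definition _ := GRing.isMonoidMorphism.Build _ _ (feval hs a)
  feval_is_monoid_morphism.

Lemma fevalU c k : feval hs a << c *g k >> = s c * word_eval a k.
Proof. exact: mmapU. Qed.

Lemma fevalC c : feval hs a c%:MP = s c.
Proof. exact: mmapC. Qed.

Lemma fevalX i : feval hs a (fX i) = a i.
Proof. by rewrite /feval mmapU /= rmorph1 mul1r /word_eval fmU big_seq1. Qed.
End Evaluation.

Section FreeAlgebra.
Variables (F : comNzRingType) (I : choiceType).

Lemma malgU_prod (c : F) (k : fmonom I) :
  << c *g k >> = c%:MP * \prod_(i <- k) (fX i : falg F I).
Proof.
suff -> : \prod_(i <- k) (fX i : falg F I) = << k >>.
  by rewrite malgM_def fgmulUU mulr1 mul1m.
case: k => w; elim: w => [|i w IH] /=.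
  by rewrite big_nil -mpolyC1E; congr << _ *g _ >>; apply: val_inj; rewrite /= fm1.
rewrite big_cons IH /fX malgM_def fgmulUU mulr1; congr << _ *g _ >>.
by apply: val_inj; rewrite /= fmM fmU.
Qed.

Lemma falg_ind (P : falg F I -> Prop) :
  (forall c, P c%:MP) -> (forall i, P (fX i)) ->
  (forall g h, P g -> P h -> P (g + h)) -> (forall g h, P g -> P h -> P (g * h)) ->
  forall g, P g.
Proof.
move=> PC PX PD PM g; rewrite (monalgE g); apply: big_ind => [||k _].
- by rewrite -malgC0E.
- exact: PD.
rewrite malgU_prod; apply: (PM) => //; apply: big_ind => [|//|i _]; last exact: PX.
by rewrite -mpolyC1E.
Qed.

Lemma eq_falg_rmorph (S : nzRingType) (f g : {rmorphism falg F I -> S}) :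
  (forall c, f c%:MP = g c%:MP) -> (forall i, f (fX i) = g (fX i)) -> f =1 g.
Proof.
move=> eqC eqX; elim/falg_ind => [c|i|p q eq_p eq_q|p q eq_p eq_q].
- exact: eqC.
- exact: eqX.
- by rewrite !rmorphD eq_p eq_q.
- by rewrite !rmorphM eq_p eq_q.
Qed.

Lemma eq_feval (S : nzRingType) (s : {rmorphism F -> S}) (hs : central_rmorph s)
    (a b : I -> S) :
  a =1 b -> feval hs a =1 feval hs b.
Proof.
move=> eq_ab; apply: (eq_falg_rmorph (f := feval hs a) (g := feval hs b)) => [c|i] /=.
  by rewrite !fevalC.
by rewrite !fevalX.
Qed.

Lemma malgC_central : central_rmorph (@malgC (fmonom I) F).
Proof.
move=> c g; rewrite /GRing.comm !malgM_def fgmulUg fgmulgU.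
by apply: eq_bigr => k _; rewrite mulrC mul1m mulm1.
Qed.
End FreeAlgebra.

Notation fsubst := (feval (@malgC_central _ _)).

Section Substitution.
Variables (F : comNzRingType) (S : nzRingType) (s : {rmorphism F -> S}).
Variables (hs : central_rmorph s) (I J : choiceType) (P : I -> falg F J).

Lemma feval_fsubst (b : J -> S) g :
  feval hs b (fsubst P g) = feval hs (feval hs b \o P) g.
Proof.
apply: (eq_falg_rmorph (f := feval hs b \o fsubst P)
                       (g := feval hs (feval hs b \o P))) => [c|i] /=.
  by rewrite !fevalC.
by rewrite !fevalX.
Qed.
End Substitution.

(** * Two-sided ideals spanned by finite families *)

Inductive ideal_span (R : pzRingType) (rs : seq R) : R -> Prop :=
| ideal_span0 : ideal_span rs 0
| ideal_spanM l r u : r \in rs -> ideal_span rs (l * r * u)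
| ideal_spanD x y : ideal_span rs x -> ideal_span rs y -> ideal_span rs (x + y).

Section IdealSpan.
Variables (R : pzRingType) (rs : seq R).

Lemma ideal_span_mem r : r \in rs -> ideal_span rs r.
Proof. by move=> r_rs; have := ideal_spanM 1 1 r_rs; rewrite mul1r mulr1. Qed.

Lemma ideal_spanMl l x : ideal_span rs x -> ideal_span rs (l * x).
Proof.
elim=> [|l' r u r_rs|y z _ Iy _ Iz]; first by rewrite mulr0; apply: ideal_span0.
  by rewrite !mulrA; apply: ideal_spanM.
by rewrite mulrDr; apply: ideal_spanD.
Qed.

Lemma ideal_spanMr u x : ideal_span rs x -> ideal_span rs (x * u).
Proof.
elim=> [|l r u' r_rs|y z _ Iy _ Iz]; first by rewrite mul0r; apply: ideal_span0.
  by rewrite -mulrA; apply: ideal_spanM.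
by rewrite mulrDl; apply: ideal_spanD.
Qed.

Lemma ideal_span_sum (T : Type) (r : seq T) (P : pred T) (G : T -> R) :
  (forall x, P x -> ideal_span rs (G x)) -> ideal_span rs (\sum_(x <- r | P x) G x).
Proof. by move=> IG; apply: big_ind => //; [apply: ideal_span0 | apply: ideal_spanD]. Qed.

Lemma ideal_span_subset rs' x : {subset rs <= rs'} -> ideal_span rs x -> ideal_span rs' x.
Proof.
move=> sub; elim=> [|l r u r_rs|x1 x2 _ I1 _ I2]; first exact: ideal_span0.
  by apply: ideal_spanM; apply: sub.
exact: ideal_spanD.
Qed.

Lemma ideal_span_rmorph (R' : pzRingType) (f : {rmorphism R -> R'}) x :
  ideal_span rs x -> ideal_span (map f rs) (f x).
Proof.
elim=> [|l r u r_rs|x1 x2 _ I1 _ I2]; first by rewrite rmorph0; apply: ideal_span0.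
  by rewrite !rmorphM; apply: ideal_spanM; apply: map_f.
by rewrite rmorphD; apply: ideal_spanD.
Qed.

Definition ideal_congr x y := ideal_span rs (x - y).

Lemma ideal_congr_refl x : ideal_congr x x.
Proof. by rewrite /ideal_congr subrr; apply: ideal_span0. Qed.

Lemma ideal_congr_sym x y : ideal_congr x y -> ideal_congr y x.
Proof. by move=> /(ideal_spanMl (-1)); rewrite mulN1r opprB. Qed.

Lemma ideal_congr_trans y x z : ideal_congr x y -> ideal_congr y z -> ideal_congr x z.
Proof. by move=> Ixy Iyz; have := ideal_spanD Ixy Iyz; rewrite addrA subrK. Qed.

Lemma ideal_congrD x x' y y' :
  ideal_congr x x' -> ideal_congr y y' -> ideal_congr (x + y) (x' + y').
Proof. by move=> Ix Iy; rewrite /ideal_congr opprD addrACA; apply: ideal_spanD. Qed.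

Lemma ideal_congrM x x' y y' :
  ideal_congr x x' -> ideal_congr y y' -> ideal_congr (x * y) (x' * y').
Proof.
move=> Ix Iy; rewrite /ideal_congr.
have -> : x * y - x' * y' = (x - x') * y + x' * (y - y').
  by rewrite mulrBl mulrBr addrA subrK.
by apply: ideal_spanD; [apply: ideal_spanMr | apply: ideal_spanMl].
Qed.

Lemma ideal_congrMl z x y : ideal_congr x y -> ideal_congr (z * x) (z * y).
Proof. exact: ideal_congrM (ideal_congr_refl z). Qed.

Lemma ideal_congrMr z x y : ideal_congr x y -> ideal_congr (x * z) (y * z).
Proof. by move/ideal_congrM; apply; apply: ideal_congr_refl. Qed.

Lemma ideal_congr_sum (T : Type) (r : seq T) (P : pred T) (G G' : T -> R) :
  (forall x, P x -> ideal_congr (G x) (G' x)) ->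
  ideal_congr (\sum_(x <- r | P x) G x) (\sum_(x <- r | P x) G' x).
Proof. by move=> IG; rewrite /ideal_congr -sumrB; apply: ideal_span_sum. Qed.

Lemma ideal_congr_span x y : ideal_congr x y -> ideal_span rs y -> ideal_span rs x.
Proof. by move=> Ixy Iy; have := ideal_spanD Ixy Iy; rewrite subrK. Qed.
End IdealSpan.

Lemma ideal_span_mx_entries (R : pzRingType) (n : nat) (rs : seq 'M[R]_n) G :
  ideal_span rs G ->
  forall i j,
  ideal_span [seq r x.1 x.2 | r : 'M[R]_n <- rs, x <- enum {: 'I_n * 'I_n}] (G i j).
Proof.
elim=> [|L r U r_rs|G1 G2 _ I1 _ I2] i j.
- by rewrite mxE; apply: ideal_span0.
- rewrite -!mulmxE mxE; apply: ideal_span_sum => k _; rewrite mxE mulr_suml.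
  apply: ideal_span_sum => x _; apply: ideal_spanM.
  by apply/allpairsP; exists (r, (x, k)); rewrite mem_enum.
- by rewrite mxE; apply: ideal_spanD.
Qed.

(** * Finite presentations *)

Section Presentation.
Variables (F : comNzRingType) (S : nzRingType) (s : {rmorphism F -> S}).
Variable hs : central_rmorph s.

Definition falg_generates (I : choiceType) (a : I -> S) :=
  forall x, exists g, feval hs a g = x.

Definition falg_fg_kernel (I : choiceType) (a : I -> S) :=
  exists rs : seq (falg F I), (forall r, r \in rs -> feval hs a r = 0) /\
    (forall g, feval hs a g = 0 -> ideal_span rs g).

Lemma falg_generates_trans (I : finType) (J : choiceType) (a : I -> S) (b : J -> S) :
  falg_generates a -> (forall i, exists g, feval hs b g = a i) -> falg_generates b.
Proof.
move=> gen_a /fin_all_exists[P bP] x; have [g <-] := gen_a x.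
by exists (fsubst P g); rewrite feval_fsubst; apply: eq_feval.
Qed.

Lemma falg_fg_kernel_transfer (I J : finType) (a : I -> S) (b : J -> S) :
  falg_generates a -> falg_fg_kernel a -> falg_generates b -> falg_fg_kernel b.
Proof.
move=> gen_a [rs [rs0 ker_rs]] gen_b.
have [P bP] := fin_all_exists (fun i => gen_b (a i)).
have [Q aQ] := fin_all_exists (fun j => gen_a (b j)).
pose rs' := map (fsubst P) rs ++ [seq fX j - fsubst P (Q j) | j <- enum J].
have fsubstPQ g : ideal_congr rs' g (fsubst P (fsubst Q g)).
  elim/falg_ind: g => [c|j|g h|g h].
  - by rewrite !fevalC; apply: ideal_congr_refl.
  - rewrite [fsubst Q _]fevalX; apply: ideal_span_mem.
    rewrite mem_cat; apply/orP; right.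
    by apply: (map_f (fun j => fX j - fsubst P (Q j))); rewrite mem_enum.
  - by rewrite !rmorphD; apply: ideal_congrD.
  - by rewrite !rmorphM; apply: ideal_congrM.
exists rs'; split=> [r|g g0].
  rewrite mem_cat => /orP[/mapP[r0 r0_rs ->]|/mapP[j _ ->]].
    by rewrite feval_fsubst -(rs0 _ r0_rs); apply: eq_feval.
  by rewrite rmorphB /= fevalX feval_fsubst (eq_feval _ bP) aQ subrr.
apply: ideal_congr_span (fsubstPQ g) _.
have : ideal_span rs (fsubst Q g).
  by apply: ker_rs; rewrite feval_fsubst -g0; apply: eq_feval.
move/(ideal_span_rmorph (fsubst P)); apply: ideal_span_subset => r r_rs.
by rewrite mem_cat r_rs.
Qed.
End Presentation.

Section NcpolyFalg.
Variables (F : comNzRingType) (m : nat).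

Definition falg_of_ncpoly (p : ncpoly F m) : falg F 'I_m :=
  \sum_(e <- p) << e.1 *g FMonom e.2 >>.

Definition ncpoly_of_falg (g : falg F 'I_m) : ncpoly F m :=
  [seq (g@_k, val k) | k <- msupp g].

Lemma ncpoly_of_falgK : cancel ncpoly_of_falg falg_of_ncpoly.
Proof.
move=> g; rewrite /falg_of_ncpoly big_map [RHS]monalgE.
by apply: eq_bigr => k _ /=; rewrite fmK.
Qed.

Lemma ncequivP p q : ncequiv p q <-> falg_of_ncpoly p = falg_of_ncpoly q.
Proof.
have coefE r w : (falg_of_ncpoly r)@_(FMonom w) = nccoef r w.
  rewrite /falg_of_ncpoly /nccoef raddf_sum [RHS]big_mkcond /=.
  by apply: eq_bigr => e _; rewrite mcoeffU fmP /= mulrb.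
split=> [eq_pq|eq_pq w]; last by rewrite -!coefE eq_pq.
by apply/malgP => k; rewrite -(fmK k) !coefE.
Qed.

Lemma nceval_falg (S : nzRingType) (s : {rmorphism F -> S}) (hs : central_rmorph s)
    (a : 'I_m -> S) p :
  nceval s a p = feval hs a (falg_of_ncpoly p).
Proof. by rewrite /nceval rmorph_sum; apply: eq_bigr => e _; rewrite /= fevalU. Qed.

Lemma falg_of_ncpoly_flatten (ps : seq (ncpoly F m)) :
  falg_of_ncpoly (flatten ps) = \sum_(p <- ps) falg_of_ncpoly p.
Proof.
elim: ps => [|p ps IH]; first by rewrite big_nil /falg_of_ncpoly big_nil.
by rewrite big_cons /= /falg_of_ncpoly big_cat -IH.
Qed.

Lemma falg_of_ncsandwich c d u r u' :
  falg_of_ncpoly (ncsandwich (c * d) u r u') =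
  << c *g FMonom u >> * falg_of_ncpoly r * << d *g FMonom u' >>.
Proof.
rewrite /ncsandwich /falg_of_ncpoly big_map mulr_sumr mulr_suml.
apply: eq_bigr => e _; rewrite !malgM_def !fgmulUU mulrAC; congr << _ *g _ >>.
by apply/eqP; rewrite fmP !fmM /= catA.
Qed.

Lemma in_idealP k (rels : 'I_k -> ncpoly F m) p :
  in_ideal rels p <->
  ideal_span [seq falg_of_ncpoly (rels i) | i <- enum 'I_k] (falg_of_ncpoly p).
Proof.
pose sandwiches t := flatten [seq ncsandwich t_.1.1.1 t_.1.1.2 (rels t_.1.2) t_.2 | t_ <- t].
split=> [[t /ncequivP ->]|].
  rewrite falg_of_ncpoly_flatten big_map; apply: ideal_span_sum => x _.
  rewrite -[x.1.1.1]mulr1 falg_of_ncsandwich; apply: ideal_spanM.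
  by apply: map_f; rewrite mem_enum.
move=> I_p; suff [t eq_p] : exists t, falg_of_ncpoly p = falg_of_ncpoly (sandwiches t).
  by exists t; apply/ncequivP.
elim: I_p => [|l r u /mapP[i _ ->]|g1 g2 _ [t1 ->] _ [t2 ->]].
- by exists [::]; rewrite /falg_of_ncpoly big_nil.
- exists [seq (l@_k1 * u@_k2, val k1, i, val k2) | k1 <- msupp l, k2 <- msupp u].
  rewrite falg_of_ncpoly_flatten big_map big_allpairs_dep /=.
  under eq_bigr do under eq_bigr do rewrite falg_of_ncsandwich !fmK.
  under eq_bigr do rewrite -mulr_sumr -monalgE.
  by rewrite -!mulr_suml -monalgE.
- exists (t1 ++ t2).
  by rewrite /sandwiches map_cat flatten_cat /falg_of_ncpoly big_cat.
Qed.
End NcpolyFalg.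

Section FinitePresentation.
Variables (F : fieldType) (S : nzRingType) (s : {rmorphism F -> S}).
Variable hs : central_rmorph s.

Lemma generatesP m (a : 'I_m -> S) : generates s a <-> falg_generates hs a.
Proof.
split=> gen_a x; have [p <-] := gen_a x.
  by exists (falg_of_ncpoly p); rewrite (nceval_falg hs).
by exists (ncpoly_of_falg p); rewrite (nceval_falg hs) ncpoly_of_falgK.
Qed.

Lemma fg_kernelP m (a : 'I_m -> S) : fg_kernel s a <-> falg_fg_kernel hs a.
Proof.
split=> [[k [rels [rels0 ker_rels]]]|[rs [rs0 ker_rs]]].
  exists [seq falg_of_ncpoly (rels i) | i <- enum 'I_k]; split.
    by move=> r /mapP[i _ ->]; rewrite -(nceval_falg hs).
  move=> g g0; rewrite -(ncpoly_of_falgK g); apply/in_idealP/ker_rels.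
  by rewrite (nceval_falg hs) ncpoly_of_falgK.
exists (size rs), (fun i => ncpoly_of_falg rs`_i); split=> [i|p p0].
  by rewrite (nceval_falg hs) ncpoly_of_falgK rs0 // mem_nth.
apply/in_idealP; apply: ideal_span_subset (ker_rs _ _); last by rewrite -(nceval_falg hs).
move=> r r_rs; have r_lt : (index r rs < size rs)%N by rewrite index_mem.
apply/mapP; exists (Ordinal r_lt); first by rewrite mem_enum.
by rewrite ncpoly_of_falgK /= nth_index.
Qed.

Lemma fin_pres_withP (I : finType) (a : I -> S) :
  falg_generates hs a -> fin_pres_with s <-> falg_fg_kernel hs a.
Proof.
move=> gen_a; split=> [[m [b [/generatesP gen_b /fg_kernelP ker_b]]]|ker_a].
  exact: falg_fg_kernel_transfer gen_b ker_b gen_a.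
pose b (j : 'I_#|I|) := a (enum_val j).
have gen_b : falg_generates hs b.
  apply: falg_generates_trans gen_a _ => i; exists (fX (enum_rank i)).
  by rewrite fevalX /b enum_rankK.
exists #|I|, b; split; first exact/generatesP.
exact/fg_kernelP/(falg_fg_kernel_transfer gen_a ker_a gen_b).
Qed.
End FinitePresentation.

(** * Matrix units modulo an ideal *)

Section MatrixUnits.
Variables (S R : pzRingType) (rs : seq R) (n : nat).
Variables (e : 'I_n.+1 -> 'I_n.+1 -> R) (f : {rmorphism S -> R}).
Local Notation "x ≡ y" := (ideal_congr rs x y) (at level 70).
Local Notation o := (ord0 : 'I_n.+1).

Hypothesis e_mul : forall i j k l, e i j * e k l ≡ if j == k then e i l else 0.
Hypothesis e_sum : \sum_i e i i ≡ 1.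
Hypothesis f_comm : forall h i j, f h * e i j ≡ e i j * f h.

Definition mx_collapse (B : 'M[S]_n.+1) : R := \sum_i \sum_j e i o * f (B i j) * e o j.

Lemma congr_mx_unit_trans i j k : e i j * e j k ≡ e i k.
Proof. by have := e_mul i j j k; rewrite eqxx. Qed.

Lemma mx_collapseD B C : mx_collapse (B + C) = mx_collapse B + mx_collapse C.
Proof.
rewrite /mx_collapse -big_split; apply: eq_bigr => i _.
rewrite -big_split; apply: eq_bigr => j _.
by rewrite mxE rmorphD mulrDr mulrDl.
Qed.

Lemma mx_collapse_delta i j : mx_collapse (delta_mx i j) = e i o * e o j.
Proof.
rewrite /mx_collapse (bigD1 i) //= (bigD1 j) //= !mxE !eqxx rmorph1 mulr1.
rewrite !big1 ?addr0 // => [p pi|q qj].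
  by apply: big1 => q _; rewrite mxE (negbTE pi) rmorph0 mulr0 mul0r.
by rewrite mxE eqxx (negbTE qj) rmorph0 mulr0 mul0r.
Qed.

Lemma congr_mx_collapse_scalar h : f h ≡ mx_collapse h%:M.
Proof.
have -> : mx_collapse h%:M = \sum_i e i o * f h * e o i.
  apply: eq_bigr => i _; rewrite (bigD1 i) //= big1 => [|j ji].
    by rewrite mxE eqxx mulr1n addr0.
  by rewrite mxE eq_sym (negbTE ji) mulr0n rmorph0 mulr0 mul0r.
rewrite -[X in X ≡ _]mulr1.
apply: ideal_congr_trans (ideal_congrMl _ (ideal_congr_sym e_sum)) _.
rewrite mulr_sumr; apply: ideal_congr_sum => i _.
apply: ideal_congr_trans (ideal_congrMl _ (ideal_congr_sym (congr_mx_unit_trans i o i))) _.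
rewrite !mulrA; apply: ideal_congrMr; exact: f_comm.
Qed.

Lemma congr_mx_sandwichM i j k l b c :
  e i o * f b * e o j * (e k o * f c * e o l) ≡
  if j == k then e i o * f (b * c) * e o l else 0.
Proof.
have -> : e i o * f b * e o j * (e k o * f c * e o l) =
    e i o * f b * (e o j * e k o) * f c * e o l by rewrite !mulrA.
apply: ideal_congr_trans
  (ideal_congrMr _ (ideal_congrMr _ (ideal_congrMl _ (e_mul o j k o)))) _.
case: (j == k) => /=; last by rewrite mulr0 !mul0r; apply: ideal_congr_refl.
rewrite -(mulrA _ (e o o)).
apply: ideal_congr_trans
  (ideal_congrMr _ (ideal_congrMl _ (ideal_congr_sym (f_comm c o o)))) _.
rewrite mulrA -(mulrA _ (e o o)) -[e i o * f b * f c]mulrA -rmorphM.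
exact: ideal_congrMl (congr_mx_unit_trans o o l).
Qed.

Lemma congr_mx_collapseM B C : mx_collapse B * mx_collapse C ≡ mx_collapse (B * C).
Proof.
rewrite /mx_collapse mulr_suml; apply: ideal_congr_sum => i _.
apply: (@ideal_congr_trans _ _
  (\sum_j \sum_k \sum_l if j == k then e i o * f (B i j * C k l) * e o l else 0)).
  rewrite mulr_suml; apply: ideal_congr_sum => j _.
  rewrite mulr_sumr; apply: ideal_congr_sum => k _.
  rewrite mulr_sumr; apply: ideal_congr_sum => l _.
  exact: congr_mx_sandwichM.
have -> : \sum_j \sum_k \sum_l (if j == k then e i o * f (B i j * C k l) * e o l else 0)
    = \sum_j \sum_l e i o * f (B i j * C j l) * e o l.
  apply: eq_bigr => j _; rewrite (bigD1 j) //= eqxx [X in _ + X]big1 ?addr0 // => k kj.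
  by apply: big1 => l _; rewrite eq_sym (negbTE kj).
rewrite exchange_big /=; apply: ideal_congr_sum => l _.
have -> : (B * C) i l = \sum_j B i j * C j l by rewrite -mulmxE mxE.
rewrite rmorph_sum mulr_sumr mulr_suml; apply: ideal_congr_refl.
Qed.
End MatrixUnits.

(** * Matrix algebras *)

Lemma in_alg_central (F : comNzRingType) (A : algType F) : central_rmorph (in_alg A).
Proof. by move=> c x; apply: comm_alg. Qed.

Lemma scalar_mx_central (F : comNzRingType) (R : nzRingType) (n : nat)
    (s : {rmorphism F -> R}) :
  central_rmorph s -> central_rmorph (scalar_mx \o s : F -> 'M[R]_n.+1).
Proof.
move=> hs c B; rewrite /GRing.comm /= -!mulmxE -!diag_const_mx.
by rewrite mul_mx_diag mul_diag_mx; apply/matrixP => i j; rewrite !mxE hs.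
Qed.

Lemma delta_mx_scalar (R : pzRingType) (m n : nat) (i : 'I_m) (j : 'I_n) (x : R) :
  delta_mx i j *m x%:M = x *: delta_mx i j.
Proof.
rewrite -diag_const_mx mul_mx_diag; apply/matrixP => p q.
by rewrite !mxE mulr_natl mulr_natr.
Qed.

Section MatrixAlgebra.
Variables (F : comNzRingType) (A : algType F) (n m : nat) (a : 'I_m -> A).
Local Notation N := n.+1.
Local Notation hA := (@in_alg_central F A).
Local Notation hM := (scalar_mx_central (n := n) hA).
Local Notation hP := (scalar_mx_central (n := n) (@malgC_central F 'I_m)).

Local Notation mx_gen_index := ('I_N * 'I_N + 'I_m)%type.

Definition mx_gen (x : mx_gen_index) : 'M[A]_N :=
  match x with inl p => delta_mx p.1 p.2 | inr l => (a l)%:M end.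

Definition mx_gen_lift (x : mx_gen_index) : 'M[falg F 'I_m]_N :=
  match x with inl p => delta_mx p.1 p.2 | inr l => (fX l)%:M end.

Local Notation E i j := (fX (inl (i, j)) : falg F mx_gen_index).
Local Notation iota := (fsubst (fun l => fX (inr l) : falg F mx_gen_index)).
Local Notation psi := (feval hP mx_gen_lift).
Local Notation evA := (feval hA a).
Local Notation evM := (feval hM mx_gen).

Lemma feval_mx_gen g : evM g = map_mx evA (psi g).
Proof.
apply: (eq_falg_rmorph (f := evM) (g := map_mx evA \o psi)) => [c|[[i j]|l]] /=.
- by rewrite !fevalC map_scalar_mx /= fevalC.
- by rewrite (fevalX hM mx_gen) fevalX /= map_delta_mx.
- by rewrite (fevalX hM mx_gen) fevalX /= map_scalar_mx; congr _%:M; exact/esym/fevalX.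
Qed.

Lemma mx_gen_lift_iota h : psi (iota h) = h%:M.
Proof.
apply: (eq_falg_rmorph (f := psi \o iota) (g := scalar_mx)) => [c|l] /=.
  by rewrite !fevalC.
by rewrite !fevalX.
Qed.

Lemma feval_mx_gen_iota h : evM (iota h) = (evA h)%:M.
Proof. by rewrite feval_mx_gen mx_gen_lift_iota map_scalar_mx. Qed.

Lemma mx_gen_generates : falg_generates hA a -> falg_generates hM mx_gen.
Proof.
move=> gen_a B.
have [h evA_h] := fin_all_exists (fun p : 'I_N * 'I_N => gen_a (B p.1 p.2)).
exists (\sum_i \sum_j E i j * iota (h (i, j))).
rewrite rmorph_sum [RHS]matrix_sum_delta; apply: eq_bigr => i _.
rewrite rmorph_sum; apply: eq_bigr => j _.
by rewrite rmorphM /= feval_mx_gen_iota fevalX /= -mulmxE delta_mx_scalar evA_h.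
Qed.

Lemma mx_gen_fg_kernel_alg : falg_fg_kernel hM mx_gen -> falg_fg_kernel hA a.
Proof.
move=> [rsM [rsM0 ker_rsM]].
exists [seq r x.1 x.2 | r : 'M_N <- map psi rsM, x <- enum {: 'I_N * 'I_N}]; split.
  move=> _ /allpairsP[[_ x] [/= /mapP[r r_rsM ->] _ ->]].
  have := congr1 (fun B : 'M[A]_N => B x.1 x.2) (feval_mx_gen r).
  by rewrite /= rsM0 // !mxE => <-.
move=> h h0; have I_iota : ideal_span rsM (iota h).
  by apply: ker_rsM; rewrite feval_mx_gen_iota h0 raddf0.
have I_psi : ideal_span (map psi rsM) (psi (iota h)) := ideal_span_rmorph psi I_iota.
have := ideal_span_mx_entries I_psi ord0 ord0.
by rewrite mx_gen_lift_iota mxE eqxx mulr1n.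
Qed.

Local Notation o := (ord0 : 'I_N).
Local Notation Al l := (fX (inr l) : falg F mx_gen_index).

Definition mx_unit_rel (x : 'I_N * 'I_N * 'I_N * 'I_N) : falg F mx_gen_index :=
  let: (i, j, k, l) := x in E i j * E k l - (if j == k then E i l else 0).

Definition scalar_comm_rel (x : 'I_m * 'I_N * 'I_N) : falg F mx_gen_index :=
  let: (l, i, j) := x in Al l * E i j - E i j * Al l.

Definition mx_relations (rsA : seq (falg F 'I_m)) : seq (falg F mx_gen_index) :=
  [seq mx_unit_rel x | x <- enum {: 'I_N * 'I_N * 'I_N * 'I_N}] ++
  (\sum_i E i i - 1) :: [seq scalar_comm_rel x | x <- enum {: 'I_m * 'I_N * 'I_N}] ++
  map iota rsA.

Section MatrixRelations.
Variable rsA : seq (falg F 'I_m).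
Local Notation "x ≡ y" := (ideal_congr (mx_relations rsA) x y) (at level 70).

Lemma congr_mx_unit i j k l : E i j * E k l ≡ if j == k then E i l else 0.
Proof.
apply: (@ideal_span_mem _ _ (mx_unit_rel (i, j, k, l))).
by rewrite mem_cat map_f ?mem_enum.
Qed.

Lemma congr_mx_unit_sum : \sum_i E i i ≡ 1.
Proof. by apply: ideal_span_mem; rewrite mem_cat mem_head orbT. Qed.

Lemma congr_iota_mx_unit h i j : iota h * E i j ≡ E i j * iota h.
Proof.
elim/falg_ind: h => [c|l|g h|g h] /=.
- by rewrite fevalC malgC_central; apply: ideal_congr_refl.
- rewrite fevalX; apply: (@ideal_span_mem _ _ (scalar_comm_rel (l, i, j))).
  by rewrite !(mem_cat, in_cons) map_f ?mem_enum ?orbT.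
- by rewrite rmorphD /= mulrDl mulrDr; apply: ideal_congrD.
- move=> Cg Ch; rewrite rmorphM /= -mulrA.
  apply: ideal_congr_trans (ideal_congrMl _ Ch) _; rewrite !mulrA.
  exact: ideal_congrMr Cg.
Qed.

Lemma ideal_span_iota h : ideal_span rsA h -> ideal_span (mx_relations rsA) (iota h).
Proof.
move=> I_h; have I_iota : ideal_span (map iota rsA) (iota h) := ideal_span_rmorph iota I_h.
by apply: ideal_span_subset I_iota => r r_rs; rewrite !(mem_cat, in_cons) r_rs !orbT.
Qed.

Local Notation collapse := (mx_collapse (fun i j => E i j) iota).

Lemma congr_mx_collapse g : g ≡ collapse (psi g).
Proof.
have congr_collapseM := congr_mx_collapseM congr_mx_unit congr_iota_mx_unit.
have congr_collapse_scalar :=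
  congr_mx_collapse_scalar congr_mx_unit congr_mx_unit_sum congr_iota_mx_unit.
elim/falg_ind: g => [c|[[i j]|l]|g h Cg Ch|g h Cg Ch].
- have -> : c%:MP = iota c%:MP by rewrite fevalC.
  rewrite mx_gen_lift_iota.
  exact: congr_collapse_scalar.
- rewrite (fevalX hP mx_gen_lift) /= mx_collapse_delta.
  exact: ideal_congr_sym (congr_mx_unit_trans congr_mx_unit i o j).
- have -> : Al l = iota (fX l) by rewrite fevalX.
  rewrite mx_gen_lift_iota.
  exact: congr_collapse_scalar.
- by rewrite rmorphD /= mx_collapseD; apply: ideal_congrD Cg Ch.
- rewrite rmorphM /=; apply: ideal_congr_trans (ideal_congrM Cg Ch) _.
  exact: congr_collapseM.
Qed.

Lemma ideal_span_collapse g :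
  (forall h, evA h = 0 -> ideal_span rsA h) -> evM g = 0 ->
  ideal_span (mx_relations rsA) (collapse (psi g)).
Proof.
move=> ker_rsA g0; apply: ideal_span_sum => i _; apply: ideal_span_sum => j _.
apply: ideal_spanMr; apply: ideal_spanMl; apply: ideal_span_iota; apply: ker_rsA.
have := congr1 (fun B : 'M[A]_N => B i j) (feval_mx_gen g).
by rewrite /= g0 !mxE => <-.
Qed.

Lemma mx_relations_vanish :
  (forall r, r \in rsA -> evA r = 0) -> forall r, r \in mx_relations rsA -> evM r = 0.
Proof.
move=> rsA0 r; rewrite !(mem_cat, in_cons) => /or4P[|/eqP->||].
- move=> /mapP[[[[i j] k] l] _ ->] /=.
  rewrite rmorphB rmorphM /= !(fevalX hM mx_gen) /= -mulmxE mul_delta_mx_cond.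
  by case: (j == k); rewrite ?(fevalX hM mx_gen) ?rmorph0 subrr.
- apply/eqP; rewrite rmorphB subr_eq0 rmorph1 rmorph_sum /=; apply/eqP.
  under eq_bigr do rewrite (fevalX hM mx_gen) /=.
  exact/esym/mx1_sum_delta.
- (* Rewriting both products at once would make Rocq compare them by unfolding
     the product of {malg}. *)
  move=> /mapP[[[l i] j] _ ->] /=; apply/eqP; rewrite rmorphB subr_eq0; apply/eqP.
  rewrite [LHS]rmorphM [RHS]rmorphM /= !(fevalX hM mx_gen) /=.
  by rewrite -mulmxE mul_scalar_mx delta_mx_scalar.
- by move=> /mapP[r' r'_rsA ->]; rewrite feval_mx_gen_iota rsA0 // raddf0.
Qed.
End MatrixRelations.

Lemma alg_fg_kernel_mx_gen : falg_fg_kernel hA a -> falg_fg_kernel hM mx_gen.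
Proof.
move=> [rsA [rsA0 ker_rsA]]; exists (mx_relations rsA); split.
  exact: mx_relations_vanish.
move=> g g0; apply: ideal_congr_span (congr_mx_collapse rsA g) _.
exact: ideal_span_collapse.
Qed.
End MatrixAlgebra.

Theorem lemma1 (F : fieldType) (A : algType F) (n : nat) :
  (0 < n)%N -> fin_gen_alg A ->
  (fin_pres_matrix A n <-> fin_pres_alg A).
Proof.
case: n => // n _ [m [a /(generatesP (@in_alg_central F A)) gen_a]].
have gen_M := mx_gen_generates (n := n) gen_a.
split=> [/(fin_pres_withP gen_M) ker_M | /(fin_pres_withP gen_a) ker_a].
  by apply/(fin_pres_withP gen_a); apply: mx_gen_fg_kernel_alg ker_M.
by apply/(fin_pres_withP gen_M); apply: alg_fg_kernel_mx_gen ker_a.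
Qed.
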